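(* Let $A$ be a real upper-triangular $d\times d$ matrix with real nonzero eigenvalues. If $A$ is invertible and $\lambda_i(A)\neq\lambda_{i'}(A)$ for all $i\neq i'$, then $T_A=P_{\rm low}(1\otimes A^T-A\otimes1)P_{\rm low}^T$ is invertible.
   Context: $\otimes$ is the Kronecker product, $1$ the identity. $P_{\rm low}\in\{0,1\}^{\frac{d(d-1)}2\times d^2}$ has as rows the standard basis row vectors of $\mathbb R^{d^2}$ selecting (in increasing order) the entries of the column-wise vectorization ${\rm vec}(B)$ corresponding to strictly lower-triangular entries ($i>j$) of $B$. *)

From HB Require Import structures.
From mathcomp Require Import all_boot all_order all_algebra.
From mathcomp Require Import mxtens.
From mathcomp Require Import reals.
Set Implicit Arguments. Unset Strict Implicit. Unset Printing Implicit Defensive.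
Import Order.TTheory GRing.Theory Num.Theory.
Local Open Scope ring_scope.

(* Column-wise vectorization vec(B) of a d x d matrix: entry B i j sits at
   0-based position j*d + i, i.e. mxtens_index (j, i).  A position p thus
   corresponds to row p %% d and column p %/ d, and is strictly
   lower-triangular iff p %/ d < p %% d. *)
Definition low_pos (d : nat) : seq nat :=
  [seq p <- iota 0 (d * d) | (p %/ d < p %% d)%N].

Definition P_low (R : pzRingType) (d : nat) : 'M[R]_((d * (d - 1)) %/ 2, d * d) :=
  \matrix_(k, c) ((val c == nth 0%N (low_pos d) k)%:R).

Definition T_mat (R : comPzRingType) (d : nat) (A : 'M[R]_d) :
    'M[R]_((d * (d - 1)) %/ 2) :=
  P_low R d *m ((1%:M *t A^T) - (A *t 1%:M)) *m (P_low R d)^T.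

From HB Require Import structures.
From mathcomp Require Import all_boot all_order all_algebra.
From mathcomp Require Import mxtens zify.
From mathcomp Require Import reals.
Set Implicit Arguments. Unset Strict Implicit. Unset Printing Implicit Defensive.
Import Order.TTheory GRing.Theory Num.Theory.
Local Open Scope ring_scope.

(* If v T_A = 0, then w = v P_low is the column-wise vectorization of a
   strictly lower-triangular matrix X, and v T_A = 0 says that the strictly
   lower part of A X - X A vanishes.  For i > j the (i, j) entry of A X - X A
   is (a_ii - a_jj) x_ij plus entries of X farther from the diagonal, so, the
   diagonal entries of A being its distinct eigenvalues, X vanishes by
   induction from the lower-left corner inwards.  Finally v = w P_low^T,
   because P_low P_low^T = 1. *)

Lemma count_gtn_iota (m n : nat) : count (fun b => m < b)%N (iota 0 n) = (n - m.+1)%N.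
Proof.
elim: n => [|n IHn] //; rewrite -[n.+1]addn1 iotaD count_cat IHn /= addn0.
by case: ltnP; lia.
Qed.

Lemma size_low_pos (d : nat) : size (low_pos d) = ((d * (d - 1)) %/ 2)%N.
Proof.
have count_prefix m : (m <= d)%N ->
    count (fun p => p %/ d < p %% d)%N (iota 0 (m * d)) = (\sum_(a < m) (d - a.+1))%N.
  elim: m => [|m IHm] lt_md; first by rewrite big_ord0.
  rewrite mulSnr iotaD count_cat IHm ?(ltnW lt_md) // big_ord_recr /= add0n.
  congr (_ + _)%N; rewrite -[(m * d)%N]addn0 iotaDl count_map -count_gtn_iota.
  apply: eq_in_count => b; rewrite mem_iota add0n /= => lt_bd.
  by rewrite divnMDl ?modnMDl ?divn_small ?modn_small ?addn0 //; lia.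
rewrite size_filter count_prefix // (reindex_inj rev_ord_inj) /=.
rewrite (eq_bigr (@nat_of_ord d)) => [|j _]; last by have := ltn_ord j; lia.
by rewrite -(big_mkord xpredT id) bin2_sum bin2 -divn2 subn1.
Qed.

Section SelectionMatrix.

Variables (R : pzRingType) (k n : nat) (s : seq nat).

Definition sel_mx : 'M[R]_(k, n) := \matrix_(i, c) ((val c == nth 0%N s i)%:R).

Hypothesis size_s : size s = k.

Lemma mul_sel_mx_notin (v : 'rV[R]_k) (c : 'I_n) : val c \notin s -> (v *m sel_mx) 0 c = 0.
Proof.
move=> c_notin_s; rewrite mxE big1 // => i _; rewrite mxE.
case: eqP => [c_eq|]; last by rewrite mulr0.
by move: c_notin_s; rewrite c_eq mem_nth ?size_s.
Qed.

Lemma mul_sel_mx_tr_eq0 (u : 'rV[R]_n) :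
  u *m sel_mx^T = 0 -> forall c : 'I_n, val c \in s -> u 0 c = 0.
Proof.
move=> /rowP u0 c c_in_s; have lt_ck : (index (val c) s < k)%N by rewrite -size_s index_mem.
move: (u0 (Ordinal lt_ck)); rewrite !mxE (bigD1 c) //= big1 => [|c' ne_c'c].
  by rewrite !mxE nth_index // eqxx mulr1 addr0.
by rewrite !mxE nth_index // val_eqE (negbTE ne_c'c) mulr0.
Qed.

Hypotheses (s_uniq : uniq s) (s_lt : {in s, forall p, p < n}%N).

Lemma sel_mx_mul_tr : sel_mx *m sel_mx^T = 1%:M.
Proof.
apply/matrixP => i j; have lt_ik : (i < size s)%N by rewrite size_s.
have lt_si : (nth 0%N s i < n)%N by apply/s_lt/mem_nth.
rewrite !mxE (bigD1 (Ordinal lt_si)) //= big1 => [|c ne_ci].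
  by rewrite !mxE eqxx mul1r addr0 nth_uniq ?size_s.
by move: ne_ci; rewrite !mxE -val_eqE /= => /negbTE ->; rewrite mul0r.
Qed.

End SelectionMatrix.

Lemma mem_low_pos (d : nat) (a b : 'I_d) :
  (val (mxtens_index (a, b)) \in low_pos d) = (a < b)%N.
Proof.
rewrite mem_filter mem_iota /= divnMDl ?modnMDl ?divn_small ?modn_small ?addn0 //.
  by rewrite add0n (mxtens_index_proof (a, b)) andbT.
exact: leq_ltn_trans (leq0n b) (ltn_ord b).
Qed.

Lemma P_lowE (R : pzRingType) (d : nat) :
  P_low R d = sel_mx R _ (d * d) (low_pos d).
Proof. by []. Qed.

(* Inverse of the row-major flattening used by [*t]; applied to the
   column-wise vectorization of X it returns X^T. *)
Definition tens_vec_mx {R : Type} {m n : nat} (u : 'rV[R]_(m * n)) : 'M[R]_(m, n) :=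
  \matrix_(i, j) u 0 (mxtens_index (i, j)).

Lemma tens_vec_mx_eq0 (R : pzRingType) (m n : nat) (u : 'rV[R]_(m * n)) :
  tens_vec_mx u = 0 -> u = 0.
Proof.
move=> /matrixP u0; apply/rowP => p; rewrite mxE.
rewrite -[p]mxtens_unindexK; case: (mxtens_unindex p) => i j.
by have := u0 i j; rewrite !mxE.
Qed.

Lemma tens_vec_mxB (R : zmodType) (m n : nat) (u u' : 'rV[R]_(m * n)) :
  tens_vec_mx (u - u') = tens_vec_mx u - tens_vec_mx u'.
Proof. by apply/matrixP => i j; rewrite !mxE. Qed.

Lemma tens_vec_mx_mul_tens (R : comPzRingType) (m n p q : nat)
    (u : 'rV[R]_(m * n)) (C : 'M[R]_(m, p)) (D : 'M[R]_(n, q)) :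
  tens_vec_mx (u *m (C *t D)) = C^T *m tens_vec_mx u *m D.
Proof.
apply/matrixP => i j; rewrite !mxE (reindex (@mxtens_index m n)) /=; last first.
  by exists (@mxtens_unindex m n) => k _; rewrite (mxtens_indexK, mxtens_unindexK).
rewrite [RHS](eq_bigr (fun b => \sum_a C a i * u 0 (mxtens_index (a, b)) * D b j)).
  rewrite exchange_big pair_big /=; apply: eq_bigr => -[a b] _.
  by rewrite tensmxE mulrA [u _ _ * _]mulrC.
by move=> b _; rewrite mxE mulr_suml; apply: eq_bigr => a _; rewrite !mxE.
Qed.

Lemma char_poly_trmx (R : comNzRingType) (d : nat) (A : 'M[R]_d) :
  char_poly A^T = char_poly A.
Proof.
by rewrite /char_poly -det_tr /char_poly_mx linearB /= tr_scalar_mx map_trmx trmxK.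
Qed.

Lemma trig_diag_inj (R : fieldType) (d : nat) (B : 'M[R]_d) (lam : 'I_d -> R) :
  is_trig_mx B -> char_poly B = \prod_(i < d) ('X - (lam i)%:P) ->
  injective lam -> injective (fun i => B i i).
Proof.
have prod_map (f : 'I_d -> R) :
    \prod_(i < d) ('X - (f i)%:P) = \prod_(x <- map f (enum 'I_d)) ('X - x%:P).
  by rewrite big_map big_enum.
move=> B_trig; rewrite char_poly_trig // !prod_map => /prod_XsubC_eq eq_diag_lam lam_inj.
apply/injectiveP; rewrite /injectiveb /dinjectiveb.
by rewrite (perm_uniq eq_diag_lam) map_inj_uniq ?enum_uniq.
Qed.

Lemma strict_upper_comm_trig_eq0 (R : idomainType) (d : nat) (B W : 'M[R]_d) :
  is_trig_mx B -> injective (fun i => B i i) ->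
  (forall a b : 'I_d, (b <= a)%N -> W a b = 0) ->
  (forall c e : 'I_d, (c < e)%N -> (W *m B - B *m W) c e = 0) ->
  W = 0.
Proof.
move=> /is_trig_mxP B_trig B_diag W_upper W_comm.
(* Induction on the distance e - c from the diagonal, outermost entries first. *)
suff W0 k (c e : 'I_d) : (d <= e - c + k)%N -> W c e = 0.
  by apply/matrixP => a b; rewrite mxE (W0 d) ?leq_addl.
elim: k c e => [|k IHk] c e le_d.
  by have := ltn_ord e; lia.
have [lt_ce|] := ltnP c e; last exact: W_upper.
have := W_comm c e lt_ce; rewrite !mxE (bigD1 e) //= [X in _ - X](bigD1 c) //=.
rewrite big1 => [|b ne_be]; last first.
  have [lt_be|lt_eb] := ltnP b e; first by rewrite B_trig ?mulr0.
  by rewrite IHk ?mul0r //; move: ne_be; rewrite -val_eqE /=; lia.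
rewrite [X in _ - (_ + X)]big1 => [|a ne_ac]; last first.
  have [lt_ca|lt_ac] := ltnP c a; first by rewrite B_trig ?mul0r.
  by rewrite IHk ?mulr0 //; move: ne_ac; rewrite -val_eqE /=; lia.
rewrite !addr0 mulrC -mulrBl => /eqP; rewrite mulf_eq0 subr_eq0 => /orP[/eqP/B_diag eq_ec|/eqP //].
by move: lt_ce; rewrite eq_ec ltnn.
Qed.

Theorem lemma8 (R : realType) (d : nat) (A : 'M[R]_d) (lam : 'I_d -> R) :
  (forall i j : 'I_d, (j < i)%N -> A i j = 0) ->
  char_poly A = \prod_(i < d) ('X - (lam i)%:P) ->
  (forall i, lam i != 0) ->
  A \in unitmx ->
  injective lam ->
  T_mat A \in unitmx.
Proof.
move=> A_upper char_A _ _ lam_inj.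
have AT_trig : is_trig_mx A^T by apply/is_trig_mxP => i j lt_ij; rewrite mxE A_upper.
have AT_diag := @trig_diag_inj _ _ _ lam AT_trig (etrans (char_poly_trmx A) char_A) lam_inj.
have size_low := size_low_pos d.
have low_uniq : uniq (low_pos d) by rewrite filter_uniq ?iota_uniq.
have low_lt : {in low_pos d, forall p, p < d * d}%N.
  by move=> p; rewrite mem_filter mem_iota => /and3P[].
rewrite -row_free_unit; apply: inj_row_free => v; rewrite /T_mat P_lowE !mulmxA.
set w := v *m sel_mx _ _ _ _ => Tv0.
suff /tens_vec_mx_eq0 w0 : tens_vec_mx w = 0.
  by rewrite -[v]mulmx1 -(sel_mx_mul_tr R size_low low_uniq low_lt) mulmxA -/w w0 mul0mx.
apply: strict_upper_comm_trig_eq0 AT_trig AT_diag _ _ => [a b le_ba | c e lt_ce].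
  by rewrite mxE mul_sel_mx_notin // mem_low_pos -leqNgt.
have -> : tens_vec_mx w *m A^T - A^T *m tens_vec_mx w =
    tens_vec_mx (w *m (1%:M *t A^T - A *t 1%:M)).
  by rewrite mulmxBr tens_vec_mxB !tens_vec_mx_mul_tens trmx1 mul1mx mulmx1.
by rewrite mxE (mul_sel_mx_tr_eq0 size_low Tv0) ?mem_low_pos.
Qed.
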